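(* Let $\mathcal{E}$ be a metric space, $\lambda,\kappa,\mu\colon\mathcal{E}\to[0,\infty)$ continuous, $t\ge0$, $J$ an $\mathcal{E}$-valued càdlàg process, $J_n=J$ for all $n$, and let $I(a)=\inf_{\gamma\in\mathcal{R}(t)}\ell(\gamma;a)$ for $a\in\mathbb{R}$. Then $I(a)=0$ if and only if $a\in\mathcal{R}(t)$. If $I(a)>0$ for some $a\in\mathbb{R}$, then exactly one of the following holds: (1) $a<c_-:=\inf\mathcal{R}(t)$ and $I(b)=\ell(c_-;b)$ for all $b\in(-\infty,c_-]$; (2) $a>c_+:=\sup\mathcal{R}(t)$ and $I(b)=\ell(c_+;b)$ for all $b\in[c_+,\infty)$; (3) neither of the previous cases holds and $I(b)=\min\{\ell(c_-;b),\ell(c_+;b)\}$ for all $b\in[c_-,c_+]$, where $c_-=\sup(\mathcal{R}(t)\cap(-\infty,a))$ and $c_+=\inf(\mathcal{R}(t)\cap(a,\infty))$.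
   Context: $\phi_t(f)=\int_0^t\lambda(f(s))\exp(-\kappa(f(s))\int_s^t\mu(f(r))\,dr)\,ds$. $\mathcal{R}(t)$ (attainable parameters) is the set of $\gamma\in[0,\infty)$ such that for every $\epsilon>0$ there is $N_\epsilon$ with $\mathbb{P}(\phi_t(J_n)\in(\gamma-\epsilon,\gamma+\epsilon))>0$ for all $n\ge N_\epsilon$; it is a non-empty closed subset of $[0,\infty)$. For $\gamma\ge0$: $\ell(\gamma;a)=\infty$ for $a<0$, $\ell(\gamma;0)=\gamma$, $\ell(\gamma;a)=\gamma-a+a\log(a/\gamma)$ for $a>0$ (equal to $\infty$ if $\gamma=0$). *)

From HB Require Import structures.
From mathcomp Require Import all_boot all_order all_algebra.
From mathcomp Require Import all_classical all_reals all_analysis.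
Set Implicit Arguments. Unset Strict Implicit. Unset Printing Implicit Defensive.
Import Order.TTheory GRing.Theory Num.Theory.
Import numFieldNormedType.Exports.
Local Open Scope classical_set_scope.
Local Open Scope ring_scope.

Definition borel_set {E : topologicalType} (B : set E) : Prop :=
  (<<s [set U : set E | open U] >>) B.

Definition cadlag {R : realType} {E : topologicalType} (f : R -> E) : Prop :=
  (forall s, 0 <= s -> f x @[x --> s^'+] --> f s) /\
  (forall s, 0 < s -> exists l : E, f x @[x --> s^'-] --> l).

Definition phi {R : realType} {E : Type} (lam kap mu : E -> R) (t : R)
    (f : R -> E) : R :=
  Rintegral lebesgue_measure `[0, t]
    (fun s => lam (f s) *
       expR (- (kap (f s) * Rintegral lebesgue_measure `[s, t] (fun r => mu (f r))))).

Definition attainable {R : realType} {E : Type} {d : measure_display}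
    {Omega : measurableType d} (P : probability Omega R)
    (lam kap mu : E -> R) (t : R) (Jn : nat -> Omega -> R -> E) : set R :=
  [set gam : R | 0 <= gam /\
     forall eps : R, 0 < eps -> exists Neps : nat, forall n : nat, (Neps <= n)%N ->
       (0 < P [set w | phi lam kap mu t (Jn n w) \in `]gam - eps, gam + eps[%R])%E].

Definition ell {R : realType} (gam a : R) : \bar R :=
  if a < 0 then +oo%E
  else if a == 0 then gam%:E
  else if gam == 0 then +oo%E
  else (gam - a + a * ln (a / gam))%:E.

Definition Irate {R : realType} (S : set R) (a : R) : \bar R :=
  ereal_inf [set ell gam a | gam in S].

(* The attainable set of the constant sequence [J_n = J] is the support of the
   law of [X = phi_t(J)]: a closed subset of [0, oo), nonempty because [X >= 0]
   is a random variable ([phi_t] of a right-continuous process is measurable by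
   joint measurability of the process and Tonelli). The map [gam |-> ell(gam; a)]
   vanishes only at [gam = a], decreases on [0, a] and increases on [a, oo), so
   over a closed set [S] its infimum is attained at the points of [S] nearest to
   [a]: at [inf S] when [a] lies below [S], at [sup S] when [a] lies above [S],
   and otherwise at one of the two ends of the gap of [S] containing [a]. *)

From HB Require Import structures.
From mathcomp Require Import all_boot all_order all_algebra.
From mathcomp Require Import all_classical all_reals all_analysis.
From mathcomp Require Import ring lra measurable_realfun.
Import Order.TTheory GRing.Theory Num.Theory.
Import numFieldNormedType.Exports.
Local Open Scope classical_set_scope.
Local Open Scope ring_scope.

Section RateFunction.
Context {R : realType}.
Implicit Types (a g h y : R).

Lemma ln_le_subr1 y : 0 < y -> ln y <= y - 1.
Proof. by move=> y0; rewrite lerBrDl -[leRHS](lnK y0) expR_ge1Dx. Qed.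

Lemma ln_lt_subr1 y : 0 < y -> y != 1 -> ln y < y - 1.
Proof.
move=> y0 y1; rewrite ltrBrDl -[ltRHS](lnK y0) expR_gt1Dx //.
by apply: contra_neq y1 => ln0; rewrite -(lnK y0) ln0 expR0.
Qed.

Lemma ell_lt0 g a : a < 0 -> ell g a = +oo%E.
Proof. by rewrite /ell => ->. Qed.

Lemma ell0 g : ell g 0 = g%:E.
Proof. by rewrite /ell ltxx eqxx. Qed.

Lemma ell0l a : 0 < a -> ell 0 a = +oo%E.
Proof. by move=> a0; rewrite /ell ltNge (ltW a0) /= gt_eqF // eqxx. Qed.

Lemma ellE g a : 0 < a -> 0 < g -> ell g a = (g - a + a * (ln a - ln g))%:E.
Proof.
move=> a0 g0; rewrite /ell ltNge (ltW a0) /= !gt_eqF //.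
by rewrite ln_div // ?posrE.
Qed.

Lemma ellxx {a} : 0 <= a -> ell a a = 0%E.
Proof.
rewrite le_eqVlt => /predU1P[<-|a0]; first by rewrite ell0.
by rewrite ellE // !subrr mulr0 addr0.
Qed.

(* Both monotonicity proofs are [ln x <= x - 1] at [x = h / g] or [x = g / h]. *)
Lemma ell_nondecreasing {a g h} : 0 <= a -> a <= g -> g <= h ->
  (ell g a <= ell h a)%E.
Proof.
rewrite le_eqVlt => /predU1P[<-|a0] ag gh; first by rewrite !ell0 lee_fin.
have g0 : 0 < g by lra.
have h0 : 0 < h by lra.
rewrite !ellE // lee_fin.
have := ln_le_subr1 _ (divr_gt0 h0 g0); rewrite ln_div ?posrE //.
have -> : h / g - 1 = (h - g) / g by field; rewrite gt_eqF.
move=> lnhg.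
have : a * (ln h - ln g) <= a * ((h - g) / g) by rewrite ler_wpM2l // ltW.
have : a * ((h - g) / g) <= g * ((h - g) / g).
  by rewrite ler_wpM2r // divr_ge0 //; lra.
have -> : g * ((h - g) / g) = h - g by field; rewrite gt_eqF.
lra.
Qed.

Lemma ell_nonincreasing {a g h} : 0 <= g -> g <= h -> h <= a ->
  (ell h a <= ell g a)%E.
Proof.
move=> g0 gh ha.
have [a0|a0] := eqVneq a 0.
  have -> : g = 0 by lra.
  by have -> : h = 0 by lra.
have ap : 0 < a by lra.
have [->|gn0] := eqVneq g 0; first by rewrite ell0l ?leey.
have gp : 0 < g by lra.
have hp : 0 < h by lra.
rewrite !ellE // lee_fin.
have := ln_le_subr1 _ (divr_gt0 gp hp); rewrite ln_div ?posrE //.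
have -> : g / h - 1 = - ((h - g) / h) by field; rewrite gt_eqF.
move=> lngh.
have : a * ((h - g) / h) <= a * (ln h - ln g) by rewrite ler_wpM2l //; lra.
have : h * ((h - g) / h) <= a * ((h - g) / h).
  by rewrite ler_wpM2r // divr_ge0 //; lra.
have -> : h * ((h - g) / h) = h - g by field; rewrite gt_eqF.
lra.
Qed.

Lemma ell_ge0 g a : 0 <= g -> (0 <= ell g a)%E.
Proof.
move=> g0; have [a0|a0] := ltP a 0; first by rewrite ell_lt0.
rewrite -(ellxx a0); have [ga|ag] := leP g a.
  exact: ell_nonincreasing.
exact: ell_nondecreasing (ltW ag).
Qed.

Lemma ell_gt0 g a : 0 <= g -> g != a -> (0 < ell g a)%E.
Proof.
move=> g0 ga; have [a_lt0|a_ge0] := ltP a 0; first by rewrite ell_lt0.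
have [a0|a_neq0] := eqVneq a 0.
  by move: ga; rewrite a0 ell0 lte_fin => ?; lra.
have [->|g_neq0] := eqVneq g 0; first by rewrite ell0l //; lra.
have ap : 0 < a by lra.
have gp : 0 < g by lra.
rewrite ellE // lte_fin.
have ga1 : g / a != 1.
  by apply: contra_neq ga => /divr1_eq.
have := ln_lt_subr1 _ (divr_gt0 gp ap) ga1; rewrite ln_div ?posrE // => lnga.
have : a * (ln g - ln a) < a * (g / a - 1) by rewrite ltr_pM2l.
have -> : a * (g / a - 1) = g - a by field; rewrite gt_eqF.
lra.
Qed.

End RateFunction.

Lemma closed_approx {R : realType} (S : set R) x : closed S ->
  (forall e, 0 < e -> exists2 g, S g & `|g - x| < e) -> S x.
Proof.
move=> cS Sx; apply: cS => U /nbhs_ballP[e e0 eU].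
have [g Sg gx] := Sx e e0; exists g; split => //; apply: eU.
by rewrite /ball /= distrC.
Qed.

Definition sup_below {R : realType} (S : set R) a := sup (S `&` `]-oo, a[).
Definition inf_above {R : realType} (S : set R) a := inf (S `&` `]a, +oo[).

Section RateInfimum.
Context {R : realType} (S : set R).
Hypotheses (S_ge0 : forall {x}, S x -> 0 <= x) (S_neq0 : S !=set0)
  (S_closed : closed S).

Lemma sup_in A : A `<=` S -> A !=set0 -> has_ubound A -> S (sup A).
Proof.
by move=> AS A0 Aub; apply: S_closed; apply: closureS AS _ (closure_sup A0 Aub).
Qed.

Lemma inf_in A : A `<=` S -> A !=set0 -> has_lbound A -> S (inf A).
Proof.
move=> AS A0 Alb; apply: closed_approx => // e e0.
have [g Ag ge] := inf_adherent e0 (conj A0 Alb).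
exists g; first exact: AS.
by have := ge_inf Alb Ag; rewrite ltr_distlC => ?; apply/andP; split; lra.
Qed.

Lemma has_lboundS : has_lbound S.
Proof. by exists 0 => x /S_ge0. Qed.

Lemma inf_ge0 : 0 <= inf S.
Proof. by apply: lb_le_inf S_neq0 _ => x /S_ge0. Qed.

Lemma inf_inS : S (inf S).
Proof. exact: inf_in has_lboundS. Qed.

Lemma sup_inS : has_ubound S -> S (sup S).
Proof. exact: sup_in. Qed.

Lemma Irate_le_ell g a : S g -> (Irate S a <= ell g a)%E.
Proof. by move=> Sg; apply: ereal_inf_lbound; exists g. Qed.

Lemma Irate_ge z a : (forall g, S g -> (z <= ell g a)%E) -> (z <= Irate S a)%E.
Proof. by move=> zle; apply: le_ereal_inf_tmp => _ [g Sg <-]; exact: zle. Qed.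

Lemma Irate_minimizer g a : S g -> (forall h, S h -> (ell g a <= ell h a)%E) ->
  Irate S a = ell g a.
Proof.
by move=> Sg gmin; apply/le_anti; rewrite Irate_le_ell // Irate_ge.
Qed.

Lemma Irate_below_inf b : b <= inf S -> Irate S b = ell (inf S) b.
Proof.
move=> bS; apply: Irate_minimizer inf_inS _ => h Sh.
have [b0|b0] := ltP b 0; first by rewrite !ell_lt0.
exact: ell_nondecreasing (ge_inf has_lboundS Sh).
Qed.

Lemma Irate_above_sup b : has_ubound S -> sup S <= b -> Irate S b = ell (sup S) b.
Proof.
move=> Sub Sb; apply: Irate_minimizer (sup_inS Sub) _ => h Sh.
exact: ell_nonincreasing (S_ge0 Sh) (ub_le_sup Sub Sh) Sb.
Qed.

Section Gap.
Variable a : R.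
Hypothesis Sa : ~ S a.

Lemma sup_below_spec : inf S <= a ->
  [/\ S (sup_below S a), sup_below S a < a &
      forall g, S g -> g < a -> g <= sup_below S a].
Proof.
move=> inf_le_a.
have inf_lt_a : inf S < a.
  rewrite lt_neqAle inf_le_a andbT.
  by apply: contra_not_neq Sa => <-; exact: inf_inS.
have A0 : S `&` `]-oo, a[ !=set0.
  by exists (inf S); split; [exact: inf_inS | rewrite /= in_itv].
have Aub : has_ubound (S `&` `]-oo, a[).
  by exists a => x [_] /=; rewrite in_itv /= => /ltW.
have Scm : S (sup_below S a) by apply: sup_in => // x [].
split => // [|g Sg ga].
  rewrite lt_neqAle; apply/andP; split; first by apply: contra_not_neq Sa => <-.
  by apply: ge_sup => // x [_] /=; rewrite in_itv /= => /ltW.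
by apply: ub_le_sup Aub _ _; split => //=; rewrite in_itv.
Qed.

Lemma inf_above_spec : ~ (has_ubound S /\ sup S < a) ->
  [/\ S (inf_above S a), a < inf_above S a &
      forall g, S g -> a < g -> inf_above S a <= g].
Proof.
move=> a_not_above.
have A0 : S `&` `]a, +oo[ !=set0.
  have [Sub|Sunb] := pselect (has_ubound S).
    exists (sup S); split; first exact: sup_inS.
    rewrite /= in_itv /= andbT lt_neqAle; apply/andP; split.
      by apply: contra_not_neq Sa => ->; exact: sup_inS.
    by rewrite leNgt; apply/negP => sup_lt_a; apply: a_not_above.
  apply: contrapT => noA; apply: Sunb; exists a => x Sx.
  rewrite leNgt; apply/negP => ax; apply: noA; exists x; split => //=.
  by rewrite in_itv /= ax.
have Alb : has_lbound (S `&` `]a, +oo[).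
  by exists a => x [_] /=; rewrite in_itv /= andbT => /ltW.
have Scp : S (inf_above S a) by apply: inf_in => // x [].
split => // [|g Sg ag].
  rewrite lt_neqAle; apply/andP; split; first by apply: contra_not_neq Sa => ->.
  by apply: lb_le_inf => // x [_] /=; rewrite in_itv /= andbT => /ltW.
by apply: ge_inf Alb _ _; split => //=; rewrite in_itv /= ag.
Qed.

(* No point of [S] lies strictly between the two neighbours of [a] in [S]. *)
Lemma Irate_in_gap b : inf S <= a -> ~ (has_ubound S /\ sup S < a) ->
  sup_below S a <= b <= inf_above S a ->
  Irate S b = Order.min (ell (sup_below S a) b) (ell (inf_above S a) b).
Proof.
move=> inf_le_a a_not_above /andP[cmb bcp].
have [Scm cma cm_max] := sup_below_spec inf_le_a.
have [Scp acp cp_min] := inf_above_spec a_not_above.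
apply/le_anti/andP; split; first by rewrite le_min !Irate_le_ell.
apply: Irate_ge => g Sg; rewrite ge_min; apply/orP.
have [ga|ag] := ltP g a.
  by left; apply: ell_nonincreasing (S_ge0 Sg) (cm_max _ Sg ga) cmb.
right; apply: ell_nondecreasing (cp_min _ Sg _) => //.
  by rewrite (le_trans (S_ge0 Scm)).
by rewrite lt_neqAle ag andbT; apply: contra_not_neq Sa => ->.
Qed.

Lemma Irate_gt0 : (0 < Irate S a)%E.
Proof.
have [a_lt|a_ge] := ltP a (inf S).
  by rewrite Irate_below_inf ?ltW // ell_gt0 ?inf_ge0 // gt_eqF.
have [[Sub sup_lt_a]|a_not_above] := pselect (has_ubound S /\ sup S < a).
  rewrite Irate_above_sup ?ltW // ell_gt0 ?lt_eqF //.
  exact: S_ge0 (sup_inS Sub).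
have [Scm cma _] := sup_below_spec a_ge.
have [Scp acp _] := inf_above_spec a_not_above.
rewrite Irate_in_gap // ?(ltW cma) ?(ltW acp) // lt_min.
by rewrite !ell_gt0 ?(lt_eqF cma) ?(gt_eqF acp) ?(S_ge0 Scm) ?(S_ge0 Scp).
Qed.

End Gap.

Lemma Irate_eq0 a : Irate S a = 0%E <-> S a.
Proof.
split=> [Ia0|Sa]; last first.
  apply/le_anti; rewrite -{1}(ellxx (S_ge0 Sa)) Irate_le_ell //.
  by apply: Irate_ge => g Sg; exact: ell_ge0 (S_ge0 Sg).
by apply: contrapT => Sa; have := Irate_gt0 _ Sa; rewrite Ia0 ltxx.
Qed.

Lemma Irate_gt0_cases a : (0 < Irate S a)%E ->
  let case1 := a < inf S /\
     (forall b : R, b <= inf S -> Irate S b = ell (inf S) b) in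
  let case2 := (has_ubound S /\ sup S < a) /\
     (forall b : R, sup S <= b -> Irate S b = ell (sup S) b) in
  let cm := sup_below S a in
  let cp := inf_above S a in
  let case3 := ~ (a < inf S) /\ ~ (has_ubound S /\ sup S < a) /\
     (forall b : R, cm <= b <= cp ->
        Irate S b = Order.min (ell cm b) (ell cp b)) in
  [\/ [/\ case1, ~ case2 & ~ case3],
      [/\ ~ case1, case2 & ~ case3] |
      [/\ ~ case1, ~ case2 & case3]].
Proof.
move=> Ia_gt0 case1 case2 cm cp case3.
have Sa : ~ S a by move/Irate_eq0 => Ia0; move: Ia_gt0; rewrite Ia0 ltxx.
have [a_lt|a_ge] := ltP a (inf S).
  apply: Or31; split.
  - by split => // b; exact: Irate_below_inf.
  - move=> [[Sub sup_lt_a] _].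
    have := ge_inf has_lboundS (sup_inS Sub).
    by have := ub_le_sup Sub inf_inS; lra.
  - by case.
have not1 : ~ case1 by case; rewrite ltNge a_ge.
have [[Sub sup_lt_a]|a_not_above] := pselect (has_ubound S /\ sup S < a).
  apply: Or32; split => //.
  - by split => // b; exact: Irate_above_sup.
  - by case=> _ [/(_ (conj Sub sup_lt_a))].
apply: Or33; split => //; first by case.
split; first by rewrite ltNge a_ge.
by split => // b; exact: Irate_in_gap.
Qed.

End RateInfimum.

Definition law_support {R : realType} {d : measure_display}
    {Omega : measurableType d} (P : probability Omega R) (X : Omega -> R) : set R :=
  [set g : R | forall eps : R, 0 < eps ->
     (0 < P [set w | X w \in `]g - eps, g + eps[%R])%E].

Lemma attainable_cst {R : realType} {E : Type} {d : measure_display}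
    {Omega : measurableType d} (P : probability Omega R) (lam kap mu : E -> R) t
    (J : Omega -> R -> E) :
  attainable P lam kap mu t (fun _ => J) =
  [set g | 0 <= g] `&` law_support P (fun w => phi lam kap mu t (J w)).
Proof.
apply/seteqP; split => g [g0 Jg]; split => // eps e0.
  by have [N JN] := Jg eps e0; exact: JN N (leqnn N).
by exists 0%N => n _; exact: Jg.
Qed.

Section LawSupport.
Context {R : realType} {d : measure_display} {Omega : measurableType d}
  (P : probability Omega R) (X : Omega -> R).
Hypothesis mX : measurable_fun setT X.

Lemma measurable_X_itv (i : interval R) : measurable [set w | X w \in i].
Proof. by have := mX measurableT _ (measurable_itv i); rewrite setTI. Qed.

Lemma measurable_X_lt x : measurable [set w | X w < x].
Proof. by have := measurable_X_itv `]-oo, x[; congr measurable. Qed.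

Lemma law_support_closed : closed (law_support P X).
Proof.
move=> x clx eps e0; have e2 : 0 < eps / 2 by lra.
have [g [Sg xg]] := clx _ (nbhsx_ballx x _ e2).
apply: lt_le_trans (Sg _ e2) _.
apply: le_measure; rewrite ?inE; try exact: measurable_X_itv.
move: xg; rewrite /ball /= ltr_distlC => /andP[xg gx] w /=.
by rewrite !in_itv /= => /andP[? ?]; apply/andP; split; lra.
Qed.

Hypothesis X_ge0 : forall w, 0 <= X w.

Lemma law_support_ge0 g : law_support P X g -> 0 <= g.
Proof.
move=> Sg; rewrite leNgt; apply/negP => g0.
have := Sg (- g); rewrite oppr_gt0 => /(_ g0).
suff -> : [set w | X w \in `]g - - g, g + - g[] = set0 by rewrite measure0 ltxx.
apply/seteqP; split => w //=; rewrite in_itv /= => /andP[_].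
by have := X_ge0 w; lra.
Qed.

Lemma exists_nat_lt_nonnull : exists n : nat, P [set w | X w < n%:R] != 0%E.
Proof.
apply: contrapT => /forallNP null_lt.
have : (P setT <= \sum_(0 <= k <oo) P [set w | (X w < k%:R)%R])%E.
  apply: measure_sigma_subadditive => // [k|]; first exact: measurable_X_lt.
  by move=> w _; exists (Num.truncn (X w)).+1 => //=; exact: truncnS_gt.
rewrite probability_setT eseries0 ?lee_fin ?ler10 // => k _ _.
by have /negP/negPn/eqP := null_lt k.
Qed.

(* The supremum [s] of the thresholds [x] with [P (X < x) = 0] is a support point:
   were its [eps]-window null, [s + eps] would be such a threshold too. *)
Lemma law_support_neq0 : law_support P X !=set0.
Proof.
pose null_below := [set x : R | P [set w | X w < x] = 0%E].
have null0 : null_below 0.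
  rewrite /null_below /= (_ : [set w | X w < 0] = set0) ?measure0 //.
  by apply/seteqP; split => w //=; rewrite ltNge X_ge0.
have [n Pn] := exists_nat_lt_nonnull.
have null_ub : has_ubound null_below.
  exists n%:R => x nx; rewrite leNgt; apply/negP => nx_lt.
  move: Pn; rewrite eq_le measure_ge0 andbT -nx => /negP; apply.
  apply: le_measure; rewrite ?inE; try exact: measurable_X_lt.
  by move=> w /= /lt_trans; apply.
exists (sup null_below) => eps e0.
rewrite lt_neqAle measure_ge0 andbT eq_sym; apply/eqP => window0.
have [x nx sup_x] := sup_adherent e0 (conj (ex_intro _ 0 null0) null_ub).
suff : null_below (sup null_below + eps) by move/(ub_le_sup null_ub); lra.
apply/eqP; rewrite eq_le measure_ge0 andbT.
have := measureU2 P (measurable_X_lt x) (measurable_X_itv `]sup null_below - eps,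
  sup null_below + eps[).
(* [window0] restated through the coercion of [P] used by [measureU2]. *)
have window0' : (P : {content set Omega -> \bar R})
  [set w | X w \in `]sup null_below - eps, sup null_below + eps[] = 0%E := window0.
rewrite [X in (_ <= X + _)%E]nx window0' adde0; apply: le_trans.
apply: le_measure; rewrite ?inE; try exact: measurable_X_lt.
  by apply: measurableU; [exact: measurable_X_lt | exact: measurable_X_itv].
move=> w /= Xw; have [Xwx|Xwx] := ltP (X w) x; [left|right] => //.
by rewrite in_itv /= Xw andbT; lra.
Qed.

End LawSupport.

Section RightGrid.
Context {R : realType}.

Definition right_grid (n : nat) (y : R) : R :=
  (Num.truncn (y * n.+1%:R)).+1%:R / n.+1%:R.

Lemma right_grid_gt n {y} : 0 <= y -> y < right_grid n y.
Proof. by move=> y0; rewrite /right_grid ltr_pdivlMr ?ltr0n // truncnS_gt. Qed.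

Lemma right_grid_le n {y} : 0 <= y -> right_grid n y <= y + n.+1%:R^-1.
Proof.
move=> y0; rewrite /right_grid ler_pdivrMr ?ltr0n // mulrDl mulVf ?pnatr_eq0 //.
by rewrite -natr1 lerD2r truncn_le mulr_ge0.
Qed.

Lemma right_grid_cvg {y} : 0 <= y -> right_grid n y @[n --> \oo] --> y.
Proof.
move=> y0; apply/cvgrPdist_lt => e e0; near=> n.
have y_lt := right_grid_gt n y0; have y_le := right_grid_le n y0.
have ne : n.+1%:R^-1 < e.
  near: n; exists (Num.truncn e^-1) => // n /= en.
  rewrite invf_plt ?posrE ?ltr0n //.
  by apply: lt_le_trans (truncnS_gt _) _; rewrite ler_nat.
set u := n.+1%:R^-1 in y_le ne; rewrite distrC ger0_norm; lra.
Unshelve. all: by end_near.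
Qed.

Lemma measurable_truncn_scale (m : R) k : 0 <= m ->
  measurable [set r : R | Num.truncn (Num.max 0 r * m) = k].
Proof.
move=> m0.
have mf : measurable_fun setT (fun r : R => Num.max 0 r * m).
  by apply: measurable_funM => //; exact: measurable_maxr.
have := mf measurableT _ (measurable_itv `[k%:R, k.+1%:R[).
rewrite setTI; congr measurable; apply/seteqP; split => r /=; rewrite in_itv /=.
  by move=> /andP[r_ge r_lt]; apply: truncn_def; rewrite r_ge r_lt.
by move=> <-; apply: truncn_itv; rewrite mulr_ge0 // le_max lexx.
Qed.

End RightGrid.

Section RightContinuousProcess.
Context {R : realType} {E : topologicalType} {d : measure_display}
  {Omega : measurableType d}.
Variable J : Omega -> R -> E.
Hypothesis J_open : forall s : R, 0 <= s -> forall U : set E, open U ->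
  measurable [set w | U (J w s)].
Hypothesis J_rc : forall w (s : R), 0 <= s -> J w x @[x --> s^'+] --> J w s.

Definition eval_path (g : E -> R) (z : Omega * R) : R :=
  g (J z.1 (Num.max 0 z.2)).

Lemma measurable_comp_path (g : E -> R) s x : continuous g -> 0 <= s ->
  measurable [set w | g (J w s) < x].
Proof.
move=> gc s0; have := J_open _ s0 _ ((continuousP g).1 gc _ (@lray_open _ _ x)).
by congr measurable; apply/seteqP; split => w /=; rewrite in_itv.
Qed.

(* Sampling at right grid points makes [eval_path g] a countable union of
   measurable rectangles; right-continuity gives pointwise convergence. *)
Lemma measurable_eval_path {g : E -> R} : continuous g ->
  measurable_fun setT (eval_path g).
Proof.
move=> gc.
apply: (measurable_fun_cvg
  (h := fun n (z : Omega * R) => g (J z.1 (right_grid n (Num.max 0 z.2))))).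
- move=> n; apply: (measurability _ (RGenInftyO.measurableE R)).
  move=> _ [_ [x ->] <-]; rewrite setTI.
  have -> : (fun z : Omega * R => g (J z.1 (right_grid n (Num.max 0 z.2))))
      @^-1` `]-oo, x[ =
    \bigcup_k ([set w | g (J w (k.+1%:R / n.+1%:R)) < x] `*`
               [set r : R | Num.truncn (Num.max 0 r * n.+1%:R) = k]).
    apply/seteqP; split => [[w r]|[w r]] /=.
      rewrite in_itv /= /right_grid => gx.
      by exists (Num.truncn (Num.max 0 r * n.+1%:R)).
    by move=> [k _ /= [gx rk]]; rewrite in_itv /= /right_grid rk.
  apply: bigcupT_measurable => k; apply: measurableX.
    exact/measurable_comp_path/divr_ge0.
  exact: measurable_truncn_scale.
- move=> [w r] _ /=; have r0 : 0 <= Num.max 0 r by rewrite le_max lexx.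
  have gJ : (g \o J w) x @[x --> (Num.max 0 r)^'+] --> g (J w (Num.max 0 r)).
    exact: cvg_comp (J_rc w _ r0) (gc _).
  have := (cvg_at_rightP _ _ _).1 gJ (right_grid ^~ (Num.max 0 r)).
  by apply; split => [n|]; [exact: right_grid_gt r0 | exact: right_grid_cvg r0].
Qed.

End RightContinuousProcess.

Lemma phi_ge0 {R : realType} {E : Type} (lam kap mu : E -> R) t (f : R -> E) :
  (forall x, 0 <= lam x) -> 0 <= phi lam kap mu t f.
Proof.
move=> lam_ge0; apply/fine_ge0/integral_ge0 => s _.
by rewrite lee_fin mulr_ge0 ?expR_ge0.
Qed.

Section PhiMeasurable.
Context {R : realType} {E : topologicalType} {d : measure_display}
  {Omega : measurableType d}.
Variable J : Omega -> R -> E.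
Hypothesis J_open : forall s : R, 0 <= s -> forall U : set E, open U ->
  measurable [set w | U (J w s)].
Hypothesis J_rc : forall w (s : R), 0 <= s -> J w x @[x --> s^'+] --> J w s.
Variables (lam kap mu : E -> R) (t : R).
Hypotheses (lam_ge0 : forall x, 0 <= lam x) (mu_ge0 : forall x, 0 <= mu x).
Hypotheses (lam_cont : continuous lam) (kap_cont : continuous kap)
  (mu_cont : continuous mu).

Let mu_window : set ((Omega * R) * R) := [set q | q.1.2 <= q.2 /\ q.2 <= t].

Lemma measurable_mu_window : measurable mu_window.
Proof.
have mB : measurable_fun setT (fun q : (Omega * R) * R => q.2 - q.1.2).
  by apply: measurable_funB => //; exact: measurableT_comp.
have m2 : measurable_fun setT (fun q : (Omega * R) * R => q.2) := measurable_snd.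
have -> : mu_window = (fun q => q.2 - q.1.2) @^-1` `[0, +oo[ `&`
    (fun q => q.2) @^-1` `]-oo, t].
  by apply/seteqP; split => q /=; rewrite !in_itv /= andbT subr_ge0.
by apply: measurableI; rewrite -[X in measurable X]setTI; [apply: mB | apply: m2].
Qed.

Let mu_integrand (q : (Omega * R) * R) : \bar R :=
  ((\1_mu_window q : R) * eval_path J mu (q.1.1, q.2))%:E.

Lemma measurable_mu_integrand : measurable_fun setT mu_integrand.
Proof.
apply/measurable_EFinP; apply: measurable_funM.
  exact: measurable_indic measurable_mu_window.
have m_pair : measurable_fun setT (fun q : (Omega * R) * R => (q.1.1, q.2)).
  by apply: measurable_fun_pair => //; exact: measurableT_comp.
exact: measurableT_comp (measurable_eval_path J J_open J_rc mu_cont) m_pair.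
Qed.

Lemma mu_integrand_ge0 q : (0 <= mu_integrand q)%E.
Proof. by rewrite lee_fin /eval_path mulr_ge0 ?indicE ?ler0n ?mu_ge0. Qed.

Let mu_tail (z : Omega * R) : R :=
  fine (fubini_F lebesgue_measure mu_integrand z).

Lemma measurable_mu_tail : measurable_fun setT mu_tail.
Proof.
apply: measurableT_comp (fine_measurable measurableT) _.
exact: (@measurable_fun_fubini_tonelli_F _ _ _ _ _ lebesgue_measure _
  measurable_mu_integrand mu_integrand_ge0).
Qed.

Lemma mu_tailE w s : 0 <= s ->
  mu_tail (w, s) = Rintegral lebesgue_measure `[s, t] (fun r => mu (J w r)).
Proof.
move=> s0; rewrite /mu_tail /fubini_F /Rintegral; congr fine.
rewrite [RHS]integral_mkcond; apply: eq_integral => r _.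
rewrite patchE /mu_integrand /eval_path /= indicE /mu_window.
case: ifPn => [|r_out].
  rewrite inE /= in_itv /= => /andP[sr rt].
  by rewrite mem_set /= ?mul1r ?max_r //; exact: le_trans sr.
rewrite memNset ?mul0r //= => -[sr rt].
by move/negP: r_out; apply; rewrite inE /= in_itv /= sr rt.
Qed.

Let time_window : set (Omega * R) := [set z | 0 <= z.2 /\ z.2 <= t].

Lemma measurable_time_window : measurable time_window.
Proof.
have m2 : measurable_fun setT (fun z : Omega * R => z.2) := measurable_snd.
have := m2 measurableT _ (measurable_itv `[0, t]).
rewrite setTI; congr measurable; apply/seteqP; split => z /=; rewrite in_itv /=.
  by move=> /andP[].
by move=> [-> ->].
Qed.

Let phi_integrand (z : Omega * R) : \bar R :=
  ((\1_time_window z : R) *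
   (eval_path J lam z * expR (- (eval_path J kap z * mu_tail z))))%:E.

Lemma measurable_phi_integrand : measurable_fun setT phi_integrand.
Proof.
apply/measurable_EFinP; apply: measurable_funM.
  exact: measurable_indic measurable_time_window.
apply: measurable_funM.
  by apply (measurable_eval_path J J_open J_rc lam_cont).
apply: measurableT_comp (@measurable_expR R) _; apply: measurable_funN.
apply: measurable_funM measurable_mu_tail.
by apply (measurable_eval_path J J_open J_rc kap_cont).
Qed.

Lemma phi_integrand_ge0 z : (0 <= phi_integrand z)%E.
Proof.
by rewrite lee_fin /eval_path !mulr_ge0 ?expR_ge0 ?indicE ?ler0n ?lam_ge0.
Qed.

Lemma phiE w :
  phi lam kap mu t (J w) = fine (fubini_F lebesgue_measure phi_integrand w).
Proof.
rewrite /fubini_F /phi /Rintegral; congr fine.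
rewrite [LHS]integral_mkcond; apply: eq_integral => s _.
rewrite patchE /phi_integrand /eval_path /= indicE /time_window.
case: ifPn => [|s_out].
  rewrite inE /= in_itv /= => /andP[s0 st].
  by rewrite mem_set /= ?mul1r ?max_r ?mu_tailE.
rewrite memNset ?mul0r //= => -[s0 st].
by move/negP: s_out; apply; rewrite inE /= in_itv /= s0 st.
Qed.

Lemma measurable_phi_path : measurable_fun setT (fun w => phi lam kap mu t (J w)).
Proof.
rewrite (funext phiE); apply: measurableT_comp (fine_measurable measurableT) _.
exact: (@measurable_fun_fubini_tonelli_F _ _ _ _ _ lebesgue_measure _
  measurable_phi_integrand phi_integrand_ge0).
Qed.

End PhiMeasurable.

Theorem proposition1 (R : realType) (E : pseudoMetricType R)
  (HE : hausdorff_space E)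
  (lam kap mu : E -> R)
  (lam_ge0 : forall x, 0 <= lam x) (kap_ge0 : forall x, 0 <= kap x)
  (mu_ge0 : forall x, 0 <= mu x)
  (lam_cont : continuous lam) (kap_cont : continuous kap)
  (mu_cont : continuous mu)
  (t : R) (t_ge0 : 0 <= t)
  (d : measure_display) (Omega : measurableType d) (P : probability Omega R)
  (J : Omega -> R -> E)
  (J_meas : forall s : R, 0 <= s -> forall B : set E, borel_set B ->
     measurable [set w | B (J w s)])
  (J_cadlag : forall w, cadlag (J w)) :
  let Rt := attainable P lam kap mu t (fun _ : nat => J) in
  let I := Irate Rt in
  (forall a : R, I a = 0%E <-> Rt a) /\
  (forall a : R, (0 < I a)%E ->
     let case1 := a < inf Rt /\
        (forall b : R, b <= inf Rt -> I b = ell (inf Rt) b) in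
     let case2 := (has_ubound Rt /\ sup Rt < a) /\
        (forall b : R, sup Rt <= b -> I b = ell (sup Rt) b) in
     let cm := sup (Rt `&` `]-oo, a[) in
     let cp := inf (Rt `&` `]a, +oo[) in
     let case3 := ~ (a < inf Rt) /\ ~ (has_ubound Rt /\ sup Rt < a) /\
        (forall b : R, cm <= b <= cp ->
           I b = Order.min (ell cm b) (ell cp b)) in
     [\/ [/\ case1, ~ case2 & ~ case3],
         [/\ ~ case1, case2 & ~ case3] |
         [/\ ~ case1, ~ case2 & case3]]).
Proof.
move=> Rt I; pose X w := phi lam kap mu t (J w).
have J_open s : 0 <= s -> forall U : set E, open U ->
    measurable [set w | U (J w s)].
  by move=> s0 U oU; apply: J_meas s0 _ _; exact: sub_sigma_algebra.
have J_rc w s : 0 <= s -> J w x @[x --> s^'+] --> J w s := (J_cadlag w).1 s.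
have mX : measurable_fun setT X by exact: measurable_phi_path.
have X_ge0 w : 0 <= X w by exact: phi_ge0.
have L_ge0 := law_support_ge0 P X X_ge0.
have L_neq0 := law_support_neq0 P X mX X_ge0.
have L_closed := law_support_closed P X mX.
have RtE : Rt = law_support P X by rewrite /Rt attainable_cst setIidr.
rewrite /I RtE.
by split => a; [exact: Irate_eq0 | exact: Irate_gt0_cases].
Qed.
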